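(* Assume the L-smoothness assumption and the $\mu$-convexity assumption with $\mu>0$, let $x^\star$ be the minimizer of $f$, suppose $\sigma_f^2=0$ (interpolation), and let $c\ge4\tau^2$, $\gamma_b>0$. Then with $\alpha:=\min\{\frac1{2cL},\gamma_b\}$, for every $T\ge1$ the FedSPS iterates satisfy $$\mathbb E\|\bar x_T-x^\star\|^2\le \frac{1}{\mu\alpha}(1-\mu\alpha)^T\|\bar x_0-x^\star\|^2.$$
   Context: Setting: integers $n\ge1$, $d\ge1$, $\tau\ge1$. For each $i\in[n]$, $\mathcal D_i$ is a probability distribution on $\Omega_i$, $F_i:\mathbb R^d\times\Omega_i\to\mathbb R$ with $F_i(\cdot,\xi)$ differentiable for $\xi\in\operatorname{supp}(\mathcal D_i)$; $f_i(x):=\mathbb E_{\xi\sim\mathcal D_i}F_i(x,\xi)$, $\mathbb E\nabla F_i(x,\xi)=\nabla f_i(x)$, $f:=\frac1n\sum_i f_i$. $F_i^\star:=\inf_{\xi\in\operatorname{supp}(\mathcal D_i),x}F_i(x,\xi)$ and $\ell_i^\star\le F_i^\star$ are given reals. FedSPS with parameters $c,\gamma_b>0$: $x_0^i=x_0$; at each $t$, client $i$ draws $\xi_t^i\sim\mathcal D_i$ independently of everything else, sets $g_t^i:=\nabla F_i(x_t^i,\xi_t^i)$, $\gamma_t^i:=\min\{\frac{F_i(x_t^i,\xi_t^i)-\ell_i^\star}{c\|g_t^i\|^2},\gamma_b\}$ (first term $+\infty$ if $g_t^i=0$); if $t+1$ is a multiple of $\tau$, $x_{t+1}^i:=\frac1n\sum_j(x_t^j-\gamma_t^jg_t^j)$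 for all $i$, else $x_{t+1}^i:=x_t^i-\gamma_t^ig_t^i$. $\bar x_t:=\frac1n\sum_i x_t^i$. L-smoothness assumption: $\|\nabla F_i(y,\xi)-\nabla F_i(x,\xi)\|\le L\|x-y\|$ for all $i$, $\xi\in\operatorname{supp}(\mathcal D_i)$, $x,y$. $\mu$-convexity assumption: $F_i(y,\xi)\ge F_i(x,\xi)+\langle\nabla F_i(x,\xi),y-x\rangle+\frac\mu2\|y-x\|^2$ for all $i,\xi,x,y$. $\sigma_f^2:=\frac1n\sum_i(f_i(x^\star)-\ell_i^\star)$. *)

From HB Require Import structures.
From mathcomp Require Import all_boot all_order all_algebra.
From mathcomp Require Import all_classical all_reals all_analysis.
Set Implicit Arguments. Unset Strict Implicit. Unset Printing Implicit Defensive.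
Import Order.TTheory GRing.Theory Num.Theory.
Import numFieldNormedType.Exports.
Local Open Scope classical_set_scope.
Local Open Scope ring_scope.

Section FedSPS.
Variable R : realType.

Definition dotv (d : nat) (u v : 'rV[R]_d) : R := \sum_(j < d) u 0 j * v 0 j.
Definition sqn (d : nat) (v : 'rV[R]_d) : R := dotv v v.

Definition grad (d : nat) (f : 'rV[R]_d -> R) (x : 'rV[R]_d) : 'rV[R]_d :=
  \row_(j < d) ('d f x (delta_mx 0 j : 'rV[R]_d)).

(* Stochastic Polyak step size with upper bound gamma_b;
   the first term is +oo when g = 0, so the min is gamma_b then. *)
Definition sps_step (c gb Fv l : R) (d : nat) (g : 'rV[R]_d) : R :=
  if g == 0 then gb else Num.min ((Fv - l) / (c * sqn g)) gb.

Unset Implicit Arguments.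
Variables (n d tau : nat) (dO : 'I_n -> measure_display)
  (Om : forall i : 'I_n, measurableType (dO i))
  (F : forall i : 'I_n, 'rV[R]_d -> Om i -> R) (lstar : 'I_n -> R)
  (c gb : R) (x0 : 'rV[R]_d).

Definition fed_step (t : nat) (X : 'I_n -> 'rV[R]_d) (s : forall i, Om i)
    : 'I_n -> 'rV[R]_d :=
  let y (i : 'I_n) : 'rV[R]_d :=
    let g := grad (fun z : 'rV[R]_d => F i z (s i)) (X i) in
    X i - sps_step c gb (F i (X i) (s i)) (lstar i) g *: g in
  if (t.+1 %% tau == 0)%N then fun _ => n%:R^-1 *: \sum_(j < n) y j else y.

(* local iterates x_t^i along a sample path (path t i = xi_t^i) *)
Fixpoint fedsps (path : nat -> forall i, Om i) (t : nat) : 'I_n -> 'rV[R]_d :=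
  match t with
  | 0 => fun _ => x0
  | t'.+1 => fed_step t' (fedsps path t') (path t')
  end.

Definition xbar (path : nat -> forall i, Om i) (t : nat) : 'rV[R]_d :=
  n%:R^-1 *: \sum_(i < n) fedsps path t i.

Definition mutually_independent (dT : measure_display) (T : measurableType dT)
    (P : probability T R) (xi : nat -> forall i : 'I_n, T -> Om i) : Prop :=
  forall (A : forall (t : nat) (i : 'I_n), set (Om i)),
    (forall t i, measurable (A t i)) ->
    forall s : seq (nat * 'I_n), uniq s ->
      fine (P (\big[setI/setT]_(k <- s) (xi k.1 k.2 @^-1` A k.1 k.2))) =
      \prod_(k <- s) fine (P (xi k.1 k.2 @^-1` A k.1 k.2)).

Definition floc (D : forall i : 'I_n, probability (Om i) R) (i : 'I_n)
    (x : 'rV[R]_d) : R :=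
  Rintegral (D i) setT (F i x).

Definition fglob (D : forall i : 'I_n, probability (Om i) R) (x : 'rV[R]_d) : R :=
  n%:R^-1 * \sum_(i < n) floc D i x.

Definition sigma_f2 (D : forall i : 'I_n, probability (Om i) R)
    (xstar : 'rV[R]_d) : R :=
  n%:R^-1 * \sum_(i < n) (floc D i xstar - lstar i).

End FedSPS.

Definition enorm {R : realType} {d : nat} (v : 'rV[R]_d) : R := Num.sqrt (sqn v).

From HB Require Import structures.
From mathcomp Require Import all_boot all_order all_algebra.
From mathcomp Require Import all_classical all_reals all_analysis.
From mathcomp Require Import ring lra measurable_realfun.
Import Order.TTheory GRing.Theory Num.Theory.
Import numFieldNormedType.Exports.
Local Open Scope classical_set_scope.
Local Open Scope ring_scope.

(* Under interpolation the nonnegative gaps [f_i x^* - l_i^*] have zero sum, so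
   almost every sample [F_i (., xi)] attains its lower bound [l_i^*] at [x^*].
   For such a sample one Polyak step, whose size lies between [alpha] and
   [(F - l) / (c |g|^2)], contracts [|x - x^*|^2] by the factor [1 - mu alpha],
   and averaging over the clients stays in the ball reached by the local steps.
   Hence [|xbar_T - x^*|^2 <= (1 - mu alpha)^T |x_0 - x^*|^2] almost surely,
   which beats the claimed bound as [mu alpha <= 1]. *)

Section Euclidean.
Context {R : realType} {d : nat}.
Implicit Types (u v w : 'rV[R]_d).

Lemma dotvC u v : dotv u v = dotv v u.
Proof. by apply: eq_bigr => j _; rewrite mulrC. Qed.

Lemma dotvDl u v w : dotv (u + v) w = dotv u w + dotv v w.
Proof. by rewrite /dotv -big_split; apply: eq_bigr => j _; rewrite !mxE mulrDl. Qed.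

Lemma dotvZl k u w : dotv (k *: u) w = k * dotv u w.
Proof. by rewrite /dotv mulr_sumr; apply: eq_bigr => j _; rewrite !mxE mulrA. Qed.

Lemma dotvNl u w : dotv (- u) w = - dotv u w.
Proof. by rewrite -scaleN1r dotvZl mulN1r. Qed.

Lemma dotvBl u v w : dotv (u - v) w = dotv u w - dotv v w.
Proof. by rewrite dotvDl dotvNl. Qed.

Lemma dotvDr u v w : dotv w (u + v) = dotv w u + dotv w v.
Proof. by rewrite dotvC dotvDl !(dotvC w). Qed.

Lemma dotvZr k u w : dotv w (k *: u) = k * dotv w u.
Proof. by rewrite dotvC dotvZl dotvC. Qed.

Lemma dotvNr u w : dotv w (- u) = - dotv w u.
Proof. by rewrite dotvC dotvNl dotvC. Qed.

Lemma dotv0l w : dotv 0 w = 0.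
Proof. by rewrite -(scale0r 0) dotvZl mul0r. Qed.

Lemma sqn_ge0 v : 0 <= sqn v.
Proof. by apply: sumr_ge0 => j _; rewrite -expr2 sqr_ge0. Qed.

Lemma sqn_eq0 v : (sqn v == 0) = (v == 0).
Proof.
apply/idP/eqP => [/eqP v0|->]; last by rewrite /sqn dotv0l.
apply/rowP => j; rewrite mxE; apply/eqP; rewrite -[_ == 0]orbb -mulf_eq0.
have sq_ge0 (x : R) : 0 <= x * x by rewrite -expr2 sqr_ge0.
move: v0; rewrite /sqn /dotv (bigD1 j) //= => /eqP.
by rewrite paddr_eq0 ?sq_ge0 ?sumr_ge0 // => /andP[].
Qed.

Lemma sqn_gt0 v : (0 < sqn v) = (v != 0).
Proof. by rewrite lt_def sqn_eq0 sqn_ge0 andbT. Qed.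

Lemma sqnZ k v : sqn (k *: v) = k ^+ 2 * sqn v.
Proof. by rewrite /sqn dotvZl dotvZr mulrA expr2. Qed.

Lemma sqnN v : sqn (- v) = sqn v.
Proof. by rewrite /sqn dotvNl dotvNr opprK. Qed.

Lemma sqnD u v : sqn (u + v) = sqn u + 2 * dotv u v + sqn v.
Proof. by rewrite /sqn dotvDl !dotvDr (dotvC v u); ring. Qed.

Lemma sqnB u v : sqn (u - v) = sqn u - 2 * dotv u v + sqn v.
Proof. by rewrite sqnD dotvNr sqnN mulrN. Qed.

Lemma sqn_sub_sym u v : sqn (u - v) = sqn (v - u).
Proof. by rewrite -sqnN opprB. Qed.

Lemma enorm_ge0 v : 0 <= enorm v.
Proof. exact: sqrtr_ge0. Qed.

Lemma enorm_sq v : enorm v ^+ 2 = sqn v.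
Proof. by rewrite sqr_sqrtr // sqn_ge0. Qed.

Lemma enormZ k v : enorm (k *: v) = `|k| * enorm v.
Proof. by rewrite /enorm sqnZ sqrtrM ?sqr_ge0 // sqrtr_sqr. Qed.

Lemma enormN v : enorm (- v) = enorm v.
Proof. by rewrite /enorm sqnN. Qed.

Lemma dotv_le_enorm u v : dotv u v <= enorm u * enorm v.
Proof.
have [->|u0] := eqVneq u 0; first by rewrite dotv0l mulr_ge0 ?enorm_ge0.
have [->|v0] := eqVneq v 0; first by rewrite dotvC dotv0l mulr_ge0 ?enorm_ge0.
set a := enorm u; set b := enorm v.
have a0 : 0 < a by rewrite sqrtr_gt0 sqn_gt0.
have b0 : 0 < b by rewrite sqrtr_gt0 sqn_gt0.
(* [|b u - a v|^2 = 2 a b (a b - <u, v>)] for [a = |u|], [b = |v|] *)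
have := sqn_ge0 (b *: u - a *: v).
rewrite sqnB !sqnZ dotvZl dotvZr -!enorm_sq -/a -/b => h.
have : 0 <= (a * b) * (2 * (a * b - dotv u v)) by nra.
by rewrite pmulr_rge0 ?mulr_gt0 // pmulr_rge0 // subr_ge0.
Qed.

Lemma enormD u v : enorm (u + v) <= enorm u + enorm v.
Proof.
rewrite -ler_sqr ?nnegrE ?addr_ge0 ?enorm_ge0 // enorm_sq sqnD -!enorm_sq.
have := dotv_le_enorm u v; nra.
Qed.

Lemma enorm_sum {I : finType} (z : I -> 'rV[R]_d) :
  enorm (\sum_i z i) <= \sum_i enorm (z i).
Proof.
elim/big_rec2: _ => [|i a b _ IH]; first by rewrite /enorm /sqn dotv0l sqrtr0.
exact: le_trans (enormD _ _) (lerD (lexx _) IH).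
Qed.

Lemma sqn_avg_le (n : nat) (z : 'I_n -> 'rV[R]_d) (xs : 'rV[R]_d) (B : R) :
  (0 < n)%N -> (forall j, sqn (z j - xs) <= B) ->
  sqn (n%:R^-1 *: \sum_j z j - xs) <= B.
Proof.
move=> n0 hz; have B0 : 0 <= B := le_trans (sqn_ge0 _) (hz (Ordinal n0)).
have -> : n%:R^-1 *: \sum_j z j - xs = n%:R^-1 *: \sum_j (z j - xs).
  rewrite sumrB sumr_const card_ord scalerBr -[xs *+ n]scaler_nat scalerA.
  by rewrite mulVf ?pnatr_eq0 -?lt0n // scale1r.
rewrite -enorm_sq -(sqr_sqrtr B0) ler_sqr ?nnegrE ?enorm_ge0 ?sqrtr_ge0 //.
rewrite enormZ ger0_norm ?invr_ge0 // ler_pdivrMl ?ltr0n //.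
apply: le_trans (enorm_sum _) _; rewrite mulr_natl -[n in _ *+ n]card_ord -sumr_const.
by apply: ler_sum => j _; rewrite ler_sqrt.
Qed.

End Euclidean.

Section Smoothness.
Context {R : realType} {d : nat}.
Implicit Types (h : 'rV[R]_d -> R) (x v : 'rV[R]_d).

Lemma diff_grad h x v : 'd h x v = dotv (grad h x) v.
Proof.
rewrite {1}(row_sum_delta v) linear_sum; apply: eq_bigr => j _.
by rewrite linearZ /= mxE mulrC.
Qed.

Lemma is_derive_line h x v (t : R) : (forall p, differentiable h p) ->
  is_derive t 1 (fun s => h (x + s *: v)) (dotv (grad h (x + t *: v)) v).
Proof.
move=> hdiff.
have dline : is_diff t (fun s : R => x + s *: v) (fun s : R => s *: v).
  by have := is_diffD (is_diff_cst x t) (is_diff_scalel t v); rewrite add0r.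
have dcomp := is_diff_comp dline (differentiableP (hdiff (x + t *: v))).
apply: DeriveDef; first exact/diff_derivable/ex_diff.
by rewrite deriveE ?diff_val /= ?scale1r ?diff_grad //; exact: ex_diff.
Qed.

(* Mean value theorem for [s |-> h (x + s v) - (a s + L/2 |v|^2 s^2)], whose
   derivative is nonpositive by Cauchy-Schwarz and the Lipschitz gradient. *)
Lemma smooth_upper_bound h (L : R) : (forall p, differentiable h p) ->
  (forall x y, enorm (grad h y - grad h x) <= L * enorm (x - y)) ->
  forall x v, h (x + v) <= h x + dotv (grad h x) v + L / 2 * sqn v.
Proof.
move=> hdiff hL x v.
set a := dotv (grad h x) v.
set q : {poly R} := a *: 'X + (L / 2 * sqn v) *: 'X^2.
have dq t : is_derive t (1 : R) (horner q) (a + L * sqn v * t).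
  apply: is_derive_eq (is_derive_poly q t) _.
  by rewrite /q derivD !derivZ derivX derivXn !hornerE /=; field.
pose psi := (fun s => h (x + s *: v)) - horner q.
have dpsi t : is_derive t (1 : R) psi
    (dotv (grad h (x + t *: v)) v - (a + L * sqn v * t)).
  exact: is_deriveB (is_derive_line h x v t hdiff) (dq t).
have cpsi : {within `[0, 1], continuous psi}.
  apply: continuous_subspaceT => t; apply: differentiable_continuous.
  by apply/derivable1_diffP; exact: (@ex_derive _ _ _ _ _ _ _ (dpsi t)).
have [s s01 hs] := MVT ltr01 (fun t _ => dpsi t) cpsi.
have s0 : 0 <= s by move: s01; rewrite in_itv /= => /andP[/ltW].
have slope_le : dotv (grad h (x + s *: v)) v <= a + L * sqn v * s.
  have -> : L * sqn v * s = L * (s * enorm v) * enorm v.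
    by rewrite -enorm_sq; move: (enorm v) => e; ring.
  rewrite -lerBlDl /a -dotvBl; apply: le_trans (dotv_le_enorm _ _) _.
  apply: ler_wpM2r; first exact: enorm_ge0.
  have -> : s * enorm v = enorm (x - (x + s *: v)).
    by rewrite opprD addrA subrr sub0r enormN enormZ ger0_norm.
  exact: hL.
have : h (x + 1 *: v) - q.[1] - (h (x + 0 *: v) - q.[0]) <= 0.
  by change (psi 1 - psi 0 <= 0); rewrite hs subr0 mulr1 subr_le0.
rewrite scale1r scale0r addr0 /q !hornerE /= !(mulr0, mulr1, subr0).
by rewrite subr_le0 lerBlDr addrA.
Qed.

End Smoothness.

Section PolyakStepSize.
Context {R : realType} {d : nat}.
Variables (c gb L : R).
Hypotheses (c_gt0 : 0 < c) (gb_gt0 : 0 < gb) (L_gt0 : 0 < L).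

Lemma sps_step_ge (Fv l : R) (g : 'rV[R]_d) :
  l <= Fv -> sqn g <= 2 * L * (Fv - l) ->
  Num.min (1 / (2 * c * L)) gb <= sps_step c gb Fv l g.
Proof.
move=> lFv hg; rewrite /sps_step; case: eqP => [_|/eqP g0].
  by rewrite ge_min lexx orbT.
rewrite le_min !ge_min lexx orbT andbT; apply/orP; left.
rewrite ler_pdivlMr ?mulr_gt0 ?sqn_gt0 //.
rewrite (_ : _ * (c * sqn g) = sqn g / (2 * L)); last by field; rewrite !gt_eqF.
by rewrite ler_pdivrMr ?mulr_gt0 // mulrC.
Qed.

Lemma sps_step_sqn_le (Fv l : R) (g : 'rV[R]_d) :
  l <= Fv -> sps_step c gb Fv l g * sqn g <= (Fv - l) / c.
Proof.
move=> lFv; rewrite /sps_step; case: eqP => [->|/eqP g0].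
  by rewrite /sqn dotv0l mulr0 divr_ge0 ?subr_ge0 // ltW.
have sg0 : 0 < sqn g by rewrite sqn_gt0.
have min_le : Num.min ((Fv - l) / (c * sqn g)) gb <= (Fv - l) / (c * sqn g).
  by rewrite ge_min lexx.
apply: le_trans (ler_wpM2r (sqn_ge0 g) min_le) _.
suff -> : (Fv - l) / (c * sqn g) * sqn g = (Fv - l) / c by [].
by field; rewrite !gt_eqF.
Qed.

End PolyakStepSize.

Definition sps_update {R : realType} {d : nat} (c gb l : R)
    (h : 'rV[R]_d -> R) (x : 'rV[R]_d) : 'rV[R]_d :=
  x - sps_step c gb (h x) l (grad h x) *: grad h x.

Section PolyakUpdate.
Context {R : realType} {d : nat}.
Variables (c gb L mu l : R) (h : 'rV[R]_d -> R) (xs : 'rV[R]_d).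
Hypotheses (c_ge1 : 1 <= c) (gb_gt0 : 0 < gb) (L_gt0 : 0 < L) (mu_ge0 : 0 <= mu).
Hypotheses (h_ge : forall y, l <= h y) (h_xs : h xs <= l).
Hypothesis h_smooth :
  forall x v, h (x + v) <= h x + dotv (grad h x) v + L / 2 * sqn v.
Hypothesis h_convex :
  forall x y, h x + dotv (grad h x) (y - x) + mu / 2 * sqn (y - x) <= h y.

Lemma sqn_grad_le x : sqn (grad h x) <= 2 * L * (h x - l).
Proof.
set g := grad h x.
have := le_trans (h_ge _) (h_smooth x (- (L^-1 *: g))).
rewrite dotvNr dotvZr sqnN sqnZ -/(sqn g).
have -> : h x + - (L^-1 * sqn g) + L / 2 * (L^-1 ^+ 2 * sqn g)
    = h x - sqn g / (2 * L) by field; rewrite gt_eqF.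
by rewrite lerBrDr -lerBrDl ler_pdivrMr ?mulr_gt0 // mulrC.
Qed.

(* With [D = |x - xs|^2] the new distance is [D - 2 gam <x - xs, g> + gam^2 |g|^2];
   strong convexity and [h xs <= l] give [<x - xs, g> >= h x - l + mu/2 D],
   and [gam |g|^2 <= (h x - l) / c <= h x - l], leaving [(1 - mu gam) D]. *)
Lemma sps_update_contract x :
  sqn (sps_update c gb l h x - xs)
    <= (1 - mu * Num.min (1 / (2 * c * L)) gb) * sqn (x - xs).
Proof.
have c_gt0 : 0 < c := lt_le_trans ltr01 c_ge1.
have hx_ge : l <= h x := h_ge x.
set g := grad h x; set gam := sps_step c gb (h x) l g.
set al := Num.min _ _.
have al_le : al <= gam by apply: sps_step_ge => //; exact: sqn_grad_le.
have gam_sqn : gam * sqn g <= (h x - l) / c by apply: sps_step_sqn_le.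
have al_ge0 : 0 <= al by rewrite le_min !ltW // divr_gt0 // !mulr_gt0.
have gam_ge0 : 0 <= gam := le_trans al_ge0 al_le.
have conv : h x - dotv (x - xs) g + mu / 2 * sqn (x - xs) <= l.
  apply: le_trans h_xs; rewrite dotvC -dotvNr opprB sqn_sub_sym; exact: h_convex.
rewrite /sps_update -/g -/gam addrAC [sqn (x - xs - _)]sqnB sqnZ dotvZr.
move: (sqn (x - xs)) (sqn_ge0 (x - xs)) (dotv (x - xs) g) conv => D D0 p conv.
have step_p : gam * (h x - l + mu / 2 * D) <= gam * p by rewrite ler_wpM2l //; lra.
have step_s : gam ^+ 2 * sqn g <= gam * (h x - l).
  rewrite expr2 -mulrA ler_wpM2l //; apply: le_trans gam_sqn _.
  by rewrite ler_pdivrMr // ler_peMr // subr_ge0.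
have step_al : mu * al * D <= mu * gam * D by rewrite ler_wpM2r // ler_wpM2l.
nra.
Qed.

End PolyakUpdate.

Section LowerBoundedMean.
Context {dO : measure_display} {Om : measurableType dO} {R : realType}.
Variables (D : probability Om R) (f : Om -> R) (l : R).
Hypotheses (mf : measurable_fun setT f) (intf : D.-integrable setT (EFin \o f)).
Hypothesis f_ge : {ae D, forall w, l <= f w}.

Lemma integral_abs_sub_lb :
  (\int[D]_w `|(f w - l)%:E| = \int[D]_w (f w)%:E - l%:E)%E.
Proof.
have mfl : measurable_fun setT (fun w => (f w - l)%:E).
  by apply/measurable_EFinP; apply: measurable_funB.
rewrite (ae_eq_integral (fun w => (f w - l)%:E)) //; first last.
- by apply: filterS f_ge => w hw _; rewrite gee0_abs // lee_fin subr_ge0.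
- exact: measurableT_comp.
rewrite (@integralB_EFin _ _ _ D setT f (cst l)) ?finite_measure_integrable_cst //.
rewrite -[X in (_ - X)%E]/(\int[D]_w (cst l%:E) w)%E.
rewrite integral_cst // -[in RHS](mule1 l%:E); congr (_ - (_ * _))%E.
exact: probability_setT.
Qed.

Lemma Rintegral_ge_lb : l <= Rintegral D setT f.
Proof.
rewrite -subr_ge0 /Rintegral -[l]/(fine l%:E) -fineB //.
  by rewrite -integral_abs_sub_lb fine_ge0 // integral_ge0 // => w _; exact: abse_ge0.
by apply: integrable_fin_num.
Qed.

Lemma ae_le_lb_of_Rintegral_le :
  Rintegral D setT f <= l -> {ae D, forall w, f w <= l}.
Proof.
move=> fl.
have fin : (\int[D]_w (f w)%:E)%E \is a fin_num by apply: integrable_fin_num.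
have mfl : measurable_fun setT (fun w => (f w - l)%:E).
  by apply/measurable_EFinP; apply: measurable_funB.
have : (\int[D]_w `|(f w - l)%:E| = 0)%E.
  rewrite integral_abs_sub_lb -(fineK fin) -EFinB; congr EFin.
  by apply/eqP; rewrite subr_eq0 eq_le fl Rintegral_ge_lb.
move=> /(ae_eq_integral_abs D measurableT mfl).1.
by apply: filterS => w /(_ I) /= [] /eqP; rewrite subr_eq0 => /eqP ->.
Qed.

End LowerBoundedMean.

Section AlmostSure.
Context {dT : measure_display} {T : measurableType dT} {R : realType}.
Variable P : probability T R.
Import HBNNSimple.

Lemma ae_witness {Q : T -> Prop} : {ae P, forall w, Q w} -> exists w, Q w.
Proof.
have P_gt0 : (0 < P setT)%E by rewrite probability_setT lte01.
exact: (@filter_ex _ _ (@ae_properfilter_algebraOfSetsType _ _ _ P P_gt0)).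
Qed.

(* No measurability of [f] is needed: the integral of a nonnegative function
   is a supremum over the simple functions below it. *)
Lemma integral_le_cst_ae (f : T -> R) (K : R) :
  (forall w, 0 <= f w) -> {ae P, forall w, f w <= K} ->
  (\int[P]_w (f w)%:E <= K%:E)%E.
Proof.
move=> f_ge0 f_le; have [w0 /(le_trans (f_ge0 w0)) K_ge0] := ae_witness f_le.
rewrite ge0_integralTE => [|w]; last by rewrite lee_fin.
apply: ge_ereal_sup => _ [h hf <-].
rewrite -[X in (X <= _)%E](_ : \int[P]_(x in setT) (h x)%:E = _)%E; last first.
  by rewrite integral_nnsfun // patch_setT.
have -> : K%:E = (\int[P]_w (cst K%:E) w)%E.
  rewrite integral_cst // -[LHS]mule1; congr (_ * _)%E.
  exact/esym/probability_setT.
apply: ae_ge0_le_integral => //.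
- by move=> w _; rewrite lee_fin.
- by apply: measurableT_comp => //; exact: measurable_funPT.
apply: filterS f_le => w fK _ /=.
by rewrite lee_fin (le_trans _ fK) // -lee_fin hf.
Qed.

End AlmostSure.

Lemma ae_comp_law {d1 d2 : measure_display} {T : measurableType d1}
    {Om : measurableType d2} {R : realType} (P : probability T R)
    (D : probability Om R) (X : T -> Om) (Q : Om -> Prop) :
  measurable_fun setT X -> (forall A, measurable A -> P (X @^-1` A) = D A) ->
  {ae D, forall w, Q w} -> {ae P, forall w, Q (X w)}.
Proof.
move=> mX X_law [N [mN N0 QN]]; exists (X @^-1` N); split.
- by rewrite -[X @^-1` N]setTI; exact: mX.
- by rewrite X_law.
- by move=> w /= nQ; apply: QN.
Qed.
Lemma interpolation_ae_le {R : realType} {n d : nat} {dO : 'I_n -> measure_display}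
    {Om : forall i : 'I_n, measurableType (dO i)}
    {D : forall i : 'I_n, probability (Om i) R}
    {F : forall i : 'I_n, 'rV[R]_d -> Om i -> R} {lstar : 'I_n -> R}
    {xs : 'rV[R]_d} :
  (0 < n)%N ->
  (forall i, measurable_fun setT (F i xs)) ->
  (forall i, (D i).-integrable setT (fun w => (F i xs w)%:E)) ->
  (forall i, {ae D i, forall w x, lstar i <= F i x w}) ->
  sigma_f2 R n d dO Om F lstar D xs = 0 ->
  forall i, {ae D i, forall w, F i xs w <= lstar i}.
Proof.
move=> n0 mF intF F_ge /eqP; rewrite mulf_eq0 invr_eq0 pnatr_eq0 eqn0Ngt n0 /=.
have gap_ge0 i : 0 <= floc R n d dO Om F D i xs - lstar i.
  by rewrite subr_ge0; apply: Rintegral_ge_lb => //; apply: filterS (F_ge i).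
move=> /eqP /(psumr_eq0P (fun i _ => gap_ge0 i)) gap0 i.
apply: ae_le_lb_of_Rintegral_le => //; last by rewrite -subr_le0 gap0.
exact: filterS (F_ge i).
Qed.

Lemma strong_convexity_le_smoothness {R : realType} {d : nat}
    {h : 'rV[R]_d -> R} {g x : 'rV[R]_d} {mu L : R} :
  (0 < d)%N ->
  (forall y, h x + dotv g (y - x) + mu / 2 * sqn (y - x) <= h y) ->
  (forall v, h (x + v) <= h x + dotv g v + L / 2 * sqn v) ->
  mu <= L.
Proof.
move=> d0 h_convex h_smooth; pose v : 'rV[R]_d := delta_mx 0 (Ordinal d0).
have v_gt0 : 0 < sqn v.
  rewrite sqn_gt0 /v; apply/eqP => /rowP/(_ (Ordinal d0))/eqP.
  by rewrite !mxE !eqxx oner_eq0.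
have := le_trans (h_convex (x + v)) (h_smooth v).
rewrite [x + v]addrC addrK lerD2l ler_pM2r // ler_pM2r //.
Qed.

Lemma sps_rate_bounds {R : realType} {c gb L mu : R} :
  1 <= c -> 0 < gb -> 0 < mu -> mu <= L ->
  0 < mu * Num.min (1 / (2 * c * L)) gb <= 1.
Proof.
move=> c_ge1 gb_gt0 mu_gt0 mu_le_L; have L_gt0 : 0 < L := lt_le_trans mu_gt0 mu_le_L.
have cL_gt0 : 0 < 2 * c * L by rewrite !mulr_gt0 //; lra.
set al := Num.min _ _.
have al_gt0 : 0 < al by rewrite lt_min divr_gt0.
have al_le : al <= 1 / (2 * c * L) by rewrite ge_min lexx.
rewrite mulr_gt0 //=; apply: le_trans (_ : L * (1 / (2 * c * L)) <= 1).
  by apply: ler_pM => //; apply: ltW.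
rewrite mulrA mulr1 ler_pdivrMr // mul1r.
by apply: ler_peMl; [exact: ltW | lra].
Qed.

Section FedSPSIterates.
Context {R : realType} {n d tau : nat} {dO : 'I_n -> measure_display}
  {Om : forall i : 'I_n, measurableType (dO i)}.
Context {F : forall i : 'I_n, 'rV[R]_d -> Om i -> R} {lstar : 'I_n -> R}.
Context {c gb q : R} {x0 xs : 'rV[R]_d} {path : nat -> forall i, Om i}.
Hypothesis q_ge0 : 0 <= q.
Hypothesis local_contract : forall t i x,
  sqn (sps_update c gb (lstar i) (fun z => F i z (path t i)) x - xs)
    <= q * sqn (x - xs).

Lemma fedsps_sqn_le t i :
  sqn (fedsps R n d tau dO Om F lstar c gb x0 path t i - xs)
    <= q ^+ t * sqn (x0 - xs).
Proof.
elim: t i => [|t IH] i; first by rewrite expr0 mul1r.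
have step j : sqn (sps_update c gb (lstar j) (fun z => F j z (path t j))
    (fedsps R n d tau dO Om F lstar c gb x0 path t j) - xs)
      <= q ^+ t.+1 * sqn (x0 - xs).
  by apply: le_trans (local_contract t j _) _; rewrite exprS -mulrA ler_wpM2l.
rewrite /= /fed_step; case: ifP => _; last exact: step.
exact: sqn_avg_le (leq_ltn_trans (leq0n _) (ltn_ord i)) step.
Qed.

Lemma xbar_sqn_le t : (0 < n)%N ->
  sqn (xbar R n d tau dO Om F lstar c gb x0 path t - xs) <= q ^+ t * sqn (x0 - xs).
Proof. by move=> n0; apply: sqn_avg_le => // i; exact: fedsps_sqn_le. Qed.

End FedSPSIterates.
Theorem corollary1
  (R : realType) (n d tau : nat)
  (hn : (1 <= n)%N) (hd : (1 <= d)%N) (htau : (1 <= tau)%N)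
  (dO : 'I_n -> measure_display) (Om : forall i : 'I_n, measurableType (dO i))
  (D : forall i : 'I_n, probability (Om i) R)
  (F : forall i : 'I_n, 'rV[R]_d -> Om i -> R) (lstar : 'I_n -> R)
  (* F_i(x, .) is a measurable, D_i-integrable function (so f_i is well defined) *)
  (HFmeas : forall i x, measurable_fun setT (F i x))
  (HFint : forall i x, (D i).-integrable setT (fun w => (F i x w)%:E))
  (* F_i(., xi) differentiable *)
  (HFdiff : forall i w x, differentiable (fun z : 'rV[R]_d => F i z w) x)
  (* E grad F_i(x, xi) = grad f_i(x) *)
  (Hfdiff : forall i x, differentiable (floc R n d dO Om F D i) x)
  (Hgint : forall i x (j : 'I_d), (D i).-integrable setT
             (fun w => (grad (fun z : 'rV[R]_d => F i z w) x 0 j)%:E))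
  (Hunbiased : forall i x (j : 'I_d),
     Rintegral (D i) setT (fun w => grad (fun z : 'rV[R]_d => F i z w) x 0 j)
     = grad (floc R n d dO Om F D i) x 0 j)
  (* l_i^* <= F_i^* = inf over xi in supp(D_i) and x of F_i(x, xi) *)
  (Hlstar : forall i, {ae D i, forall w, forall x, lstar i <= F i x w})
  (L mu : R)
  (* L-smoothness (for xi in the support of D_i) *)
  (HL : forall i, {ae D i, forall w, forall x y : 'rV[R]_d,
     enorm (grad (fun z => F i z w) y - grad (fun z => F i z w) x)
       <= L * enorm (x - y)})
  (* mu-convexity *)
  (Hconv : forall i w (x y : 'rV[R]_d),
     F i x w + dotv (grad (fun z => F i z w) x) (y - x) + mu / 2 * sqn (y - x)
       <= F i y w)
  (hmu : 0 < mu)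
  (* x* is the minimizer of f *)
  (xstar : 'rV[R]_d) (Hmin : forall x, fglob R n d dO Om F D xstar <= fglob R n d dO Om F D x)
  (* interpolation *)
  (Hinterp : sigma_f2 R n d dO Om F lstar D xstar = 0)
  (c gb : R) (hc : 4 * (tau%:R) ^+ 2 <= c) (hgb : 0 < gb)
  (x0 : 'rV[R]_d)
  (* the random samples xi_t^i ~ D_i, all mutually independent *)
  (dT : measure_display) (T : measurableType dT) (P : probability T R)
  (xi : nat -> forall i : 'I_n, T -> Om i)
  (Hxim : forall t i, measurable_fun setT (xi t i))
  (Hlaw : forall t i (A : set (Om i)), measurable A -> P (xi t i @^-1` A) = D i A)
  (Hind : mutually_independent R n dO Om dT T P xi)
  (Tn : nat) (hT : (1 <= Tn)%N) :
  let alpha := Num.min (1 / (2 * c * L)) gb in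
  (\int[P]_w (sqn (xbar R n d tau dO Om F lstar c gb x0 (fun t i => xi t i w) Tn
                    - xstar))%:E
   <= ((mu * alpha)^-1 * (1 - mu * alpha) ^+ Tn
        * sqn (x0 - xstar))%:E)%E.
Proof.
cbv zeta; set alpha := Num.min _ _.
have c_ge1 : 1 <= c.
  have : 1 <= (tau%:R : R) ^+ 2 by rewrite expr_ge1 // ler1n.
  lra.
have Fxs_le := interpolation_ae_le hn (fun i => HFmeas i xstar)
  (fun i => HFint i xstar) Hlstar Hinterp.
pose good i (w : Om i) :=
  [/\ forall x, lstar i <= F i x w, F i xstar w <= lstar i &
   forall x v, F i (x + v) w
    <= F i x w + dotv (grad (fun z => F i z w) x) v + L / 2 * sqn v].
have Hgood i : {ae D i, forall w, good i w}.
  apply: filterS (filterI (Hlstar i) (filterI (HL i) (Fxs_le i))).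
  by move=> w [F_ge [F_lip Fxs]]; split=> //; exact: smooth_upper_bound.
have Hall : {ae P, forall w t i, good i (xi t i w)}.
  apply: ae_foralln => t; apply: filter_forall => i.
  exact: ae_comp_law (Hxim t i) (Hlaw t i) (Hgood i).
have [w0 [_ _ smooth0]] := ae_witness _ (Hgood (Ordinal hn)).
have mu_le_L := strong_convexity_le_smoothness hd (Hconv _ w0 0) (smooth0 0).
have /andP[rate_gt0 rate_le1] := sps_rate_bounds c_ge1 hgb hmu mu_le_L.
apply: integral_le_cst_ae => [w|]; first exact: sqn_ge0.
apply: filterS Hall => w Hw.
have contract t i x :
    sqn (sps_update c gb (lstar i) (fun z => F i z (xi t i w)) x - xstar)
      <= (1 - mu * alpha) * sqn (x - xstar).
  have [F_ge Fxs F_smooth] := Hw t i.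
  by apply: sps_update_contract => //; [lra | exact: ltW].
have q_ge0 : 0 <= 1 - mu * alpha by rewrite subr_ge0.
apply: le_trans (xbar_sqn_le q_ge0 contract Tn hn) _.
rewrite -mulrA ler_peMl ?invf_ge1 // mulr_ge0 ?exprn_ge0 ?sqn_ge0 //; lra.
Qed.
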